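(* Let $W$ be an irreducible Coxeter group with generators $s_1,\dots,s_n$ and relations $s_i^2=e$, $(s_is_j)^{m_{ij}}=e$ ($m_{ij}\in\{2,3,\dots\}\cup\{\infty\}$). The following are equivalent: (a) $W$ is finite; (b) there exists an admissible E-GCM graph whose associated Coxeter group is $W$; (c) every E-GCM graph whose associated Coxeter group is $W$ is admissible.
   Context: An E-GCM is a real $n\times n$ matrix $M=(M_{ij})$ with $M_{ii}=2$, $M_{ij}\le 0$ ($i\ne j$), $M_{ij}\ne0\iff M_{ji}\ne0$, and nonzero $M_{ij}M_{ji}$ either $\ge 4$ or $=4\cos^2(\pi/m)$ for an integer $m\ge3$. Its E-GCM graph $(\Gamma,M)$ has nodes $\gamma_i$, adjacent iff $M_{ij}\ne0$. Its associated Coxeter group $W(\Gamma,M)$ has generators $s_i$ and relations $s_i^2=e$, $(s_is_j)^{m_{ij}}=e$ with $m_{ij}=k$ if $M_{ij}M_{ji}=4\cos^2(\pi/k)$ ($k\ge2$ integer) and $m_{ij}=\infty$ if $M_{ij}M_{ji}\ge 4$; ''associated Coxeter group is $W$'' means these $m_{ij}$ coincide with those of $W$ (after identifying nodes with generators). $W$ irreducible means the graph on $\{1,\dots,n\}$ with $i\sim j$ iff $m_{ij}\ge3$ is connected (equivalently $\Gamma$ is connected). Numbers game: positions $\lambda\in\mathbb{R}^n$; firing $\gamma_i$ (allowed iff $\lambda_i>0$) replaces each $\lambda_j$ by $\lambda_j-M_{ij}\lambda_i$; a game repeatedly fires nodes with positive population while any exist; a game sequence is convergent if finite. A connected E-GCM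 graph is admissible if some nonzero position with all $\lambda_i\ge0$ has a convergent game sequence. *)

From Stdlib Require Import Reals.
From mathcomp Require Import all_boot.
Set Implicit Arguments. Unset Strict Implicit. Unset Printing Implicit Defensive.

(* m i j = Some k  means m_ij = k ;  m i j = None means m_ij = infinity.
   Diagonal entries are irrelevant (the relation s_i^2 = e is built in). *)
Definition coxeter_matrix (n : nat) (m : 'I_n -> 'I_n -> option nat) : Prop :=
  forall i j : 'I_n, i != j ->
    m i j = m j i /\ (forall k, m i j = Some k -> (2 <= k)%N).

(* Since every
   generator is an involution, the quotient monoid of words is the group W. *)
Inductive cox_eq (n : nat) (m : 'I_n -> 'I_n -> option nat) :
  seq 'I_n -> seq 'I_n -> Prop :=
| cox_refl w : cox_eq m w w
| cox_sym w1 w2 : cox_eq m w1 w2 -> cox_eq m w2 w1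
| cox_trans w1 w2 w3 : cox_eq m w1 w2 -> cox_eq m w2 w3 -> cox_eq m w1 w3
| cox_sq u v (i : 'I_n) : cox_eq m (u ++ [:: i; i] ++ v) (u ++ v)
| cox_braid u v (i j : 'I_n) k : i != j -> m i j = Some k ->
    cox_eq m (u ++ flatten (nseq k [:: i; j]) ++ v) (u ++ v).

Definition coxeter_finite (n : nat) (m : 'I_n -> 'I_n -> option nat) : Prop :=
  exists S : seq (seq 'I_n), forall w : seq 'I_n, exists2 w', w' \in S & cox_eq m w w'.

Definition cox_adj (n : nat) (m : 'I_n -> 'I_n -> option nat) : rel 'I_n :=
  fun i j => (i != j) && (match m i j with None => true | Some k => (3 <= k)%N end).

Definition coxeter_irreducible (n : nat) (m : 'I_n -> 'I_n -> option nat) : Prop :=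
  forall i j : 'I_n, connect (cox_adj m) i j.

Open Scope R_scope.

Definition EGCM (n : nat) (M : 'I_n -> 'I_n -> R) : Prop :=
  (forall i, M i i = 2) /\
  (forall i j, i != j -> M i j <= 0) /\
  (forall i j, M i j <> 0 <-> M j i <> 0) /\
  (forall i j, i != j -> M i j * M j i <> 0 ->
     M i j * M j i >= 4 \/
     exists k : nat, (3 <= k)%N /\ M i j * M j i = 4 * (cos (PI / INR k))^2).

Definition egcm_connected (n : nat) (M : 'I_n -> 'I_n -> R) : Prop :=
  forall i j : 'I_n,
    connect (fun a b : 'I_n => (a != b) && (if Req_EM_T (M a b) 0 then false else true)) i j.

Definition assoc_coxeter (n : nat) (M : 'I_n -> 'I_n -> R)
    (m : 'I_n -> 'I_n -> option nat) : Prop :=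
  forall i j : 'I_n, i != j ->
    match m i j with
    | None => M i j * M j i >= 4
    | Some k => M i j * M j i = 4 * (cos (PI / INR k))^2
    end.

Definition fire (n : nat) (M : 'I_n -> 'I_n -> R) (i : 'I_n) (l : 'I_n -> R) : 'I_n -> R :=
  fun j => l j - M i j * l i.

Fixpoint legal_play (n : nat) (M : 'I_n -> 'I_n -> R) (l : 'I_n -> R) (s : seq 'I_n) : Prop :=
  match s with
  | [::] => True
  | i :: s' => 0 < l i /\ legal_play M (fire M i l) s'
  end.

Definition play (n : nat) (M : 'I_n -> 'I_n -> R) (l : 'I_n -> R) (s : seq 'I_n) : 'I_n -> R :=
  foldl (fun l' i => fire M i l') l s.

Definition convergent_game (n : nat) (M : 'I_n -> 'I_n -> R) (l : 'I_n -> R) : Prop :=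
  exists s : seq 'I_n, legal_play M l s /\ forall j, play M l s j <= 0.

Definition admissible (n : nat) (M : 'I_n -> 'I_n -> R) : Prop :=
  egcm_connected M /\
  exists l : 'I_n -> R, (forall i, 0 <= l i) /\ (exists i, l i <> 0) /\ convergent_game M l.

(* Firing a node acts on positions like the corresponding reflection, and a
   rank-two computation (Chebyshev sequences in cos (pi / m_ij)) shows that
   firings satisfy the Coxeter relations, so a play only depends on the
   element of W it spells.  If W is finite, the W-orbit of a position is
   finite and a potential decreasing along legal plays bounds their length,
   so every game converges.  Conversely, strong convergence (all terminating
   plays from a position have the same length and spell the same element)
   lets one append any generator to a legal play up to equivalence, as long
   as no population vanishes; such generic positions are real ones perturbed
   lexicographically.  From an admissible position, an induction over the
   subsets Z of generators yields generic positions with bounded Z-plays, so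
   every Z-word is equivalent to a short one and W_Z is finite. *)

From Stdlib Require Import Reals Lra Lia.
From mathcomp Require Import all_boot all_algebra zify.
From mathcomp Require Import Rstruct boolp.
Import GRing.Theory Num.Theory.
Set Implicit Arguments. Unset Strict Implicit. Unset Printing Implicit Defensive.
Open Scope R_scope.

Section NumbersGame.
Variables (n : nat) (M : 'I_n -> 'I_n -> R).

Lemma play_cat l s1 s2 : play M l (s1 ++ s2) = play M (play M l s1) s2.
Proof. exact: foldl_cat. Qed.

Lemma play_rcons l s i : play M l (rcons s i) = fire M i (play M l s).
Proof. exact: foldl_rcons. Qed.

Lemma play_opp q s : play M (fun j => - q j) s = (fun j => - play M q s j).
Proof.
elim: s q => [|i s IH] q //=; rewrite -IH; congr play.
by apply: funext => j; rewrite /fire; ring.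
Qed.

Hypothesis M_diag : forall i, M i i = 2.

Lemma fireK i : involutive (fire M i).
Proof. by move=> l; apply: funext => j; rewrite /fire M_diag; ring. Qed.

Lemma play_revK q s : play M (play M q (rev s)) s = q.
Proof. by elim: s q => [|a s IH] q //=; rewrite rev_cons play_rcons fireK IH. Qed.

Lemma play_pair_span q (i j : 'I_n) w : all [in [:: i; j]] w ->
  exists A B, forall z, play M q w z = q z - A * M i z - B * M j z.
Proof.
elim/last_ind: w => [|w a IH]; first by exists 0, 0 => z /=; ring.
rewrite all_rcons => /andP[a_ij /IH[A [B E]]].
move: a_ij; rewrite !inE => /orP[]/eqP->.
- by exists (A + play M q w i), B => z; rewrite play_rcons /fire !E; ring.
- by exists A, (B + play M q w j) => z; rewrite play_rcons /fire !E; ring.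
Qed.

Lemma play_pair_fixed q (i j : 'I_n) w :
  i != j -> all [in [:: i; j]] w -> M i j * M j i < 4 ->
  play M q w i = q i -> play M q w j = q j -> play M q w = q.
Proof.
move=> ij w_ij Mij4 Ei Ej; have [A [B E]] := play_pair_span q w_ij.
move: Ei Ej; rewrite !E !M_diag => Ei Ej.
(* A and B solve a 2x2 linear system of determinant 4 - M i j * M j i. *)
have B0 : B = 0.
  have : B * (4 - M i j * M j i) = 0 by nra.
  by case/Rmult_integral => //; lra.
have A0 : A = 0 by rewrite B0 in Ei; lra.
by apply: funext => z; rewrite E A0 B0; ring.
Qed.

Lemma play_vanish (Z : {set 'I_n}) q t : all [in Z] t ->
  (forall j, j \in Z -> play M q t j = 0) -> forall j, j \in Z -> q j = 0.
Proof.
elim: t q => //= i t IH q /andP[iZ tZ] /(IH _ tZ) fire0.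
have qi0 : q i = 0 by have := fire0 i iZ; rewrite /fire M_diag; lra.
by move=> j /fire0; rewrite /fire qi0; lra.
Qed.

End NumbersGame.

(** * Dihedral subgames *)

Section AlternatingWords.
Variable T : Type.
Implicit Types i j : T.

Definition alt_node i j (t : nat) := if odd t then j else i.

Fixpoint alt_word i j t : seq T := if t is t'.+1 then i :: alt_word j i t' else [::].

Lemma size_alt_word i j t : size (alt_word i j t) = t.
Proof. by elim: t i j => //= t IH i j; rewrite IH. Qed.

Lemma alt_nodeS i j t : alt_node i j t.+1 = alt_node j i t.
Proof. by rewrite /alt_node /=; case: (odd t). Qed.

Lemma alt_wordS i j t : alt_word i j t.+1 = rcons (alt_word i j t) (alt_node i j t).
Proof. by elim: t i j => // t IH i j; rewrite -[LHS]/(i :: alt_word j i t.+1) IH alt_nodeS. Qed.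

Lemma flatten_braid i j k : flatten (nseq k [:: i; j]) = alt_word i j k.*2.
Proof. by elim: k => //= k ->. Qed.

Lemma alt_word_double i j k : alt_word i j k ++ rev (alt_word j i k) = alt_word i j k.*2.
Proof.
elim: k i j => // k IH i j.
rewrite doubleS [alt_word j i _]/= rev_cons -cats1 catA [_ ++ _]/= IH.
by rewrite -[RHS]/(i :: alt_word j i k.*2.+1) alt_wordS /alt_node odd_double cats1.
Qed.

Lemma rev_alt_word_double i j k : rev (alt_word i j k.*2) = alt_word j i k.*2.
Proof. by rewrite -alt_word_double rev_cat revK alt_word_double. Qed.

End AlternatingWords.

Lemma alt_word_pair (T : eqType) (i j : T) t : all [in [:: i; j]] (alt_word i j t).
Proof.
elim: t i j => //= t IH i j.
by rewrite !inE eqxx /=; apply: sub_all (IH j i) => x; rewrite !inE orbC.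
Qed.

Lemma pi_div_bounds k : (3 <= k)%N -> 0 < PI / INR k < PI / 2.
Proof.
move=> k3; have := PI_RGT_0; have : 3 <= INR k by have := le_INR _ _ (leP k3); rewrite [INR 3]/=; lra.
split; first by apply: Rdiv_lt_0_compat; lra.
by apply: (Rmult_lt_reg_r (2 * INR k)); [lra | field_simplify; nra].
Qed.

Lemma nat_ind2 (P : nat -> Prop) :
  P 0%N -> P 1%N -> (forall t, P t -> P t.+1 -> P t.+2) -> forall t, P t.
Proof.
move=> P0 P1 PS t; suff: P t /\ P t.+1 by case.
by elim: t => [|t [Pt Pt1]]; split=> //; apply: PS.
Qed.

Section Chebyshev.
Variables a b : R.

(* The populations fired along an alternating play of two nodes i, j with
   a = - M i j and b = - M j i, starting from populations x at i and y at j. *)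
Fixpoint cheb (x y : R) (t : nat) {struct t} : R :=
  if t is t1.+1 then
    if t1 is t'.+1 then - cheb x y t' + (if odd t' then b else a) * cheb x y t1 else x
  else - y.

Lemma chebSS x y t : cheb x y t.+2 = - cheb x y t + (if odd t then b else a) * cheb x y t.+1.
Proof. by []. Qed.

Lemma cheb_lin x y t : cheb x y t = x * cheb 1 0 t + y * cheb 0 1 t.
Proof.
elim/nat_ind2: t => [||t IH IH1]; try by rewrite /=; ring.
by rewrite !chebSS IH IH1; ring.
Qed.

(* With a = sa^2, b = sb^2 and sa * sb = 2 cos th, the rescaled sequence
   cheb t / (if odd t then sb else sa) satisfies the Chebyshev recurrence
   e (t+2) = 2 cos th * e (t+1) - e t, whence the sine formula. *)
Lemma cheb_closed x y th sa sb t :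
  0 < sa -> 0 < sb -> a = sa * sa -> b = sb * sb -> sa * sb = 2 * cos th -> sin th <> 0 ->
  cheb x y t = (if odd t then sb else sa) *
    (x / sb * sin (INR t * th) + y / sa * sin ((INR t - 1) * th)) / sin th.
Proof.
move=> sa_pos sb_pos Ea Eb sab sin_th; elim/nat_ind2: t => [||t IH IH1].
- rewrite /= Rmult_0_l sin_0 (_ : (0 - 1) * th = - th) ?sin_neg; last by ring.
  by field; lra.
- by rewrite /= Rmult_1_l Rminus_diag Rmult_0_l sin_0; field; lra.
have sin_step u : sin ((u + 1 + 1) * th) = 2 * cos th * sin ((u + 1) * th) - sin (u * th).
  rewrite (_ : (u + 1 + 1) * th = (u + 1) * th + th); last by ring.
  rewrite (_ : u * th = (u + 1) * th - th); last by ring.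
  by rewrite sin_plus sin_minus; ring.
rewrite chebSS IH IH1 !S_INR /= negbK Ea Eb.
rewrite sin_step (_ : (INR t + 1 + 1 - 1) * th = (INR t - 1 + 1 + 1) * th); last by ring.
rewrite sin_step (_ : INR t - 1 + 1 = INR t); last by ring.
rewrite (_ : INR t + 1 - 1 = INR t); last by ring.
by rewrite -sab; case: (odd t) => /=; field; lra.
Qed.

Section FiniteOrder.
Variable k : nat.
Hypotheses (k_ge3 : (3 <= k)%N) (a_pos : 0 < a) (b_pos : 0 < b).
Hypothesis ab_cos : a * b = 4 * cos (PI / INR k) ^ 2.

Let th := PI / INR k.

Let k_gt : 3 <= INR k.
Proof. by have := le_INR _ _ (leP k_ge3); rewrite [INR 3]/=; lra. Qed.

Let k_th : INR k * th = PI.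
Proof. by rewrite /th; field; lra. Qed.

Let th_bounds : 0 < th < PI / 2. Proof. exact: pi_div_bounds. Qed.

Let sin_th : 0 < sin th.
Proof. by apply: sin_gt_0; have := PI_RGT_0; lra. Qed.

Let cos_th : 0 < cos th.
Proof. by apply: cos_gt_0; lra. Qed.

Let sa_pos : 0 < sqrt a. Proof. exact: sqrt_lt_R0. Qed.
Let sb_pos : 0 < sqrt b. Proof. exact: sqrt_lt_R0. Qed.
Let a_sq : a = sqrt a * sqrt a. Proof. by rewrite sqrt_sqrt; lra. Qed.
Let b_sq : b = sqrt b * sqrt b. Proof. by rewrite sqrt_sqrt; lra. Qed.

Let sab : sqrt a * sqrt b = 2 * cos th.
Proof.
rewrite -sqrt_mult; try lra.
by rewrite ab_cos -/th (_ : 4 * cos th ^ 2 = Rsqr (2 * cos th)) ?sqrt_Rsqr; rewrite /Rsqr; lra.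
Qed.

Lemma cheb_period x y : cheb x y k.*2 = - y /\ cheb x y k.*2.+1 = x.
Proof.
have sin0 : sin th <> 0 by lra.
have k2th : INR k.*2 * th = 2 * PI by rewrite -muln2 mult_INR -k_th /=; ring.
have sin2 u : sin (2 * PI + u) = sin u by rewrite sin_plus sin_2PI cos_2PI; ring.
rewrite !(cheb_closed x y _ sa_pos sb_pos a_sq b_sq sab sin0) S_INR oddS odd_double /=.
rewrite (_ : (INR k.*2 + 1) * th = 2 * PI + th); last by rewrite -k2th; ring.
rewrite (_ : (INR k.*2 + 1 - 1) * th = 2 * PI + 0); last by rewrite -k2th; ring.
rewrite (_ : (INR k.*2 - 1) * th = 2 * PI + - th); last by rewrite -k2th; ring.
rewrite k2th sin_2PI.
by rewrite !sin2 sin_0 sin_neg; split; field; lra.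
Qed.

Lemma cheb_nonneg t : (1 <= t <= k)%N ->
  0 <= cheb 1 0 t /\ 0 <= cheb 0 1 t /\ 0 < cheb 1 0 t + cheb 0 1 t.
Proof.
case/andP=> t_ge1 t_le; have sin0 : sin th <> 0 by lra.
rewrite !(cheb_closed _ _ _ sa_pos sb_pos a_sq b_sq sab sin0).
set w := if odd t then _ else _.
have w_pos : 0 < w by rewrite /w; case: (odd t).
have t1 : 1 <= INR t by rewrite (_ : 1 = INR 1) //; apply/le_INR/leP.
have tk : INR t <= INR k by apply/le_INR/leP.
have S1 : 0 <= sin (INR t * th) by apply: sin_ge_0; nra.
have S2 : 0 <= sin ((INR t - 1) * th) by apply: sin_ge_0; nra.
have S12 : 0 < sin (INR t * th) \/ 0 < sin ((INR t - 1) * th).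
  case: (ltnP t k) => [tk'|kt].
  - left; apply: sin_gt_0; first nra.
    have : INR t + 1 <= INR k by rewrite -S_INR; apply/le_INR/leP.
    nra.
  - right; apply: sin_gt_0; last nra.
    have -> : t = k by apply/eqP; rewrite eqn_leq t_le.
    nra.
have C1 : 0 < w / sqrt b / sin th by apply: Rdiv_lt_0_compat => //; apply: Rdiv_lt_0_compat.
have C2 : 0 < w / sqrt a / sin th by apply: Rdiv_lt_0_compat => //; apply: Rdiv_lt_0_compat.
rewrite (_ : w * _ / sin th = w / sqrt b / sin th * sin (INR t * th)); last by field; lra.
rewrite (_ : w * _ / sin th = w / sqrt a / sin th * sin ((INR t - 1) * th)); last by field; lra.
by split; [|split]; nra.
Qed.

End FiniteOrder.

Lemma chebyshev_rec_ge (e : nat -> R) C : 2 <= C -> 0 <= e 1%N -> e 0%N <= e 1%N ->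
  (forall t, e t.+2 = C * e t.+1 - e t) -> forall t, e 1%N <= e t.+1.
Proof.
move=> C2 e1 e01 rec t; suff: e 1%N - e 0%N <= e t.+1 - e t /\ e 1%N <= e t.+1 by case.
elim: t => [|t [IH1 IH2]]; first lra.
have : 0 <= (C - 2) * e t.+1 by apply: Rmult_le_pos; lra.
by rewrite rec; split; lra.
Qed.

Lemma cheb_pos_inf t : 0 < a -> 0 < b -> 4 <= a * b -> (0 < t)%N ->
  0 < cheb 1 0 t /\ 0 <= cheb 0 1 t.
Proof.
move=> a_pos b_pos ab4; case: t => // t _.
set sa := sqrt a; set sb := sqrt b.
have sa_pos : 0 < sa by apply: sqrt_lt_R0.
have sb_pos : 0 < sb by apply: sqrt_lt_R0.
have a_sq : a = sa * sa by rewrite /sa sqrt_sqrt; lra.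
have b_sq : b = sb * sb by rewrite /sb sqrt_sqrt; lra.
have C2 : 2 <= sa * sb.
  rewrite /sa /sb -sqrt_mult -1?[2](sqrt_square 2); try lra.
  by apply: sqrt_le_1; lra.
pose w u := if odd u then sb else sa.
have w_pos u : 0 < w u by rewrite /w; case: (odd u).
have rec x y u : cheb x y u.+2 / w u.+2 = sa * sb * (cheb x y u.+1 / w u.+1) - cheb x y u / w u.
  by rewrite chebSS /w /= negbK; case: (odd u) => /=; [rewrite b_sq | rewrite a_sq]; field; lra.
have isa := Rinv_0_lt_compat _ sa_pos; have isb := Rinv_0_lt_compat _ sb_pos.
have H10 : 1 / sb <= cheb 1 0 t.+1 / w t.+1.
  by apply: (chebyshev_rec_ge (e := fun u => cheb 1 0 u / w u) C2 _ _ (rec 1 0)); rewrite /w /= /Rdiv; lra.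
have H01 : 0 / sb <= cheb 0 1 t.+1 / w t.+1.
  by apply: (chebyshev_rec_ge (e := fun u => cheb 0 1 u / w u) C2 _ _ (rec 0 1)); rewrite /w /= /Rdiv; lra.
have wK c : c = c / w t.+1 * w t.+1 by field; have := w_pos t.+1; lra.
rewrite (wK (cheb 1 0 _)) (wK (cheb 0 1 _)); have := w_pos t.+1; move: H10 H01.
by rewrite /Rdiv Rmult_0_l Rmult_1_l; split; nra.
Qed.

End Chebyshev.

Section CoxeterWords.
Variables (n : nat) (m : 'I_n -> 'I_n -> option nat).

Lemma cox_eq_ctx a b u v : cox_eq m u v -> cox_eq m (a ++ u ++ b) (a ++ v ++ b).
Proof.
elim=> {u v} [w|w1 w2 _ IH|w1 w2 w3 _ IH1 _ IH2|u v i|u v i j k ij mij].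
- exact: cox_refl.
- exact: cox_sym.
- exact: cox_trans IH1 IH2.
- by have := cox_sq m (a ++ u) (v ++ b) i; rewrite -!catA.
- by have := cox_braid (a ++ u) (v ++ b) ij mij; rewrite -!catA.
Qed.

Lemma cox_eq_catl a u v : cox_eq m u v -> cox_eq m (a ++ u) (a ++ v).
Proof. by move/(cox_eq_ctx a [::]); rewrite !cats0. Qed.

Lemma cox_eq_catr b u v : cox_eq m u v -> cox_eq m (u ++ b) (v ++ b).
Proof. exact: cox_eq_ctx [::] b u v. Qed.

Lemma cox_eq_cons i u v : cox_eq m u v -> cox_eq m (i :: u) (i :: v).
Proof. exact: cox_eq_catl [:: i] u v. Qed.

Lemma cox_eq_rcons i u v : cox_eq m u v -> cox_eq m (rcons u i) (rcons v i).
Proof. by rewrite -!cats1; apply: cox_eq_catr. Qed.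

Lemma cox_eq_cat_rev w : cox_eq m (w ++ rev w) [::].
Proof.
elim: w => [|i w IH]; first exact: cox_refl.
have -> : (i :: w) ++ rev (i :: w) = [:: i] ++ (w ++ rev w) ++ [:: i].
  by rewrite rev_cons -cats1 /= catA.
apply: cox_trans (cox_eq_ctx [:: i] [:: i] IH) _.
exact: cox_sq m [::] [::] i.
Qed.

Lemma cox_eq_alt i j k : i != j -> m i j = Some k ->
  cox_eq m (alt_word i j k) (alt_word j i k).
Proof.
move=> ij mij; set v := alt_word j i k.
have := cox_eq_catl (alt_word i j k) (cox_eq_cat_rev (rev v)).
rewrite revK cats0 catA alt_word_double => /cox_sym/cox_trans; apply.
by have := cox_braid [::] v ij mij; rewrite flatten_braid.
Qed.

Lemma cox_eq_rev u v : coxeter_matrix m -> cox_eq m u v -> cox_eq m (rev u) (rev v).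
Proof.
move=> mC; elim=> {u v} [w|w1 w2 _ IH|w1 w2 w3 _ IH1 _ IH2|u v i|u v i j k ij mij].
- exact: cox_refl.
- exact: cox_sym.
- exact: cox_trans IH1 IH2.
- by rewrite !rev_cat -catA; apply: cox_sq.
- rewrite !rev_cat flatten_braid rev_alt_word_double -flatten_braid -catA.
  by apply: cox_braid; [rewrite eq_sym | rewrite -(proj1 (mC i j ij))].
Qed.

End CoxeterWords.

Section BraidInvariance.
Variables (n : nat) (M : 'I_n -> 'I_n -> R) (m : 'I_n -> 'I_n -> option nat).
Hypotheses (M_egcm : EGCM M) (m_coxeter : coxeter_matrix m) (Mm : assoc_coxeter M m).

Lemma egcm_diag i : M i i = 2.
Proof. by case: M_egcm. Qed.

Lemma egcm_offdiag_le0 i j : i != j -> M i j <= 0.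
Proof. by case: M_egcm => _ [+ _]; apply. Qed.

Lemma cox_order2_offdiag i j : i != j -> m i j = Some 2%N -> M i j = 0 /\ M j i = 0.
Proof.
move=> ij mij; have := Mm ij; rewrite mij /= (_ : 1 + 1 = 2); last by ring.
rewrite cos_PI2 => prod0; have [_ [_ [Mnz _]]] := M_egcm.
have {prod0} : M i j * M j i = 0 by rewrite prod0; ring.
case/Rmult_integral=> E; split=> //; apply: contrapT.
- by move/(Mnz j i).
- by move/(Mnz i j).
Qed.

Lemma cox_order_ge3_offdiag i j k : i != j -> m i j = Some k -> (3 <= k)%N ->
  M i j < 0 /\ M j i < 0.
Proof.
move=> ij mij /pi_div_bounds th; have := Mm ij; rewrite mij => prod.
have : 0 < cos (PI / INR k) by apply: cos_gt_0; lra.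
have := egcm_offdiag_le0 ij; have : j != i by rewrite eq_sym.
by move/egcm_offdiag_le0; split; nra.
Qed.

Lemma play_alt_word q i j t : i != j ->
  play M q (alt_word i j t) (alt_node i j t) = cheb (- M i j) (- M j i) (q i) (q j) t.+1 /\
  play M q (alt_word i j t) (alt_node i j t.+1) = - cheb (- M i j) (- M j i) (q i) (q j) t.
Proof.
move=> ij; elim: t => [|t [IH IH1]]; first by rewrite /alt_node /=; split=> //; ring.
have nodeSS : alt_node i j t.+2 = alt_node i j t by rewrite /alt_node /= negbK.
rewrite alt_wordS play_rcons /fire nodeSS egcm_diag IH IH1 chebSS; split; last by ring.
by rewrite /alt_node /=; case: (odd t) => /=; ring.
Qed.

Lemma play_braid q i j k : i != j -> m i j = Some k ->
  play M q (flatten (nseq k [:: i; j])) = q.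
Proof.
move=> ij mij; rewrite flatten_braid.
have [P1 P2] := play_alt_word q k.*2 ij.
have node_i : alt_node i j k.*2 = i by rewrite /alt_node odd_double.
have node_j : alt_node i j k.*2.+1 = j by rewrite /alt_node oddS odd_double.
rewrite node_i in P1; rewrite node_j in P2.
set c := cheb _ _ _ _ in P1 P2.
have [lt4 [c2k c2k1]] : M i j * M j i < 4 /\ c k.*2 = - q j /\ c k.*2.+1 = q i.
  have prod := Mm ij; rewrite mij in prod.
  have [k_lt3|k_ge3] := ltnP k 3.
  - have k2 : k = 2%N by have := proj2 (m_coxeter ij) k mij; lia.
    have [Mij Mji] := cox_order2_offdiag ij (etrans mij (congr1 Some k2)).
    by rewrite /c k2 Mij Mji /=; split; [lra | split; ring].
  - have [Mij Mji] := cox_order_ge3_offdiag ij mij k_ge3.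
    have [th0 th2] := pi_div_bounds k_ge3.
    have sin_pos : 0 < sin (PI / INR k) by apply: sin_gt_0; lra.
    split; first by rewrite prod; have := sin2_cos2 (PI / INR k); rewrite /Rsqr; nra.
    by apply: (cheb_period k_ge3); lra.
apply: (play_pair_fixed egcm_diag ij (alt_word_pair i j _) lt4).
- by rewrite P1 c2k1.
- by rewrite P2 c2k Ropp_involutive.
Qed.

Lemma play_cox_eq q u v : cox_eq m u v -> play M q u = play M q v.
Proof.
move=> uv; elim: uv q => {u v} [//|w1 w2 _ IH|w1 w2 w3 _ IH1 _ IH2|u v i|u v i j k ij mij] q.
- by rewrite IH.
- by rewrite IH1 IH2.
- by rewrite !play_cat /= (fireK egcm_diag).
- by rewrite !play_cat play_braid.
Qed.

End BraidInvariance.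

(** * Lexicographic positions and strong convergence *)

Section LexicographicOrder.
Implicit Types v w : nat -> R.

Definition lexpos v := exists k, 0 < v k /\ forall k', (k' < k)%N -> v k' = 0.

Lemma lexposD v w : lexpos v -> lexpos w -> lexpos (fun k => v k + w k).
Proof.
move=> [kv [v_pos v0]] [kw [w_pos w0]].
have [k [vw_pos vw0]] : exists k, 0 < v k + w k /\ (k <= kv)%N /\ (k <= kw)%N.
  case: (ltngtP kv kw) => [lt|lt|eq]; [exists kv | exists kw | exists kv].
  - by rewrite (w0 _ lt); split; [lra | split=> //; exact: ltnW].
  - by rewrite (v0 _ lt); split; [lra | split=> //; exact: ltnW].
  - by rewrite -eq in w_pos *; split=> //; lra.
exists k; split=> // k' lt; rewrite v0 ?w0; [ring | lia | lia].
Qed.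

Lemma lexposZ c v : 0 < c -> lexpos v -> lexpos (fun k => c * v k).
Proof.
move=> c_pos [k [v_pos v0]]; exists k; split=> [|k' /v0 ->]; last by ring.
exact: Rmult_lt_0_compat.
Qed.

Lemma lexpos_comb a b v w : 0 <= a -> 0 <= b -> 0 < a + b ->
  lexpos v -> lexpos w -> lexpos (fun k => a * v k + b * w k).
Proof.
move=> a_ge0 b_ge0 ab_pos vP wP.
have [a0|a_neq0] := Req_dec a 0.
  suff -> : (fun k => a * v k + b * w k) = (fun k => b * w k) by apply: lexposZ => //; lra.
  by apply: funext => k; rewrite a0; ring.
have [b0|b_neq0] := Req_dec b 0.
  suff -> : (fun k => a * v k + b * w k) = (fun k => a * v k) by apply: lexposZ => //; lra.
  by apply: funext => k; rewrite b0; ring.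
by apply: lexposD; apply: lexposZ => //; lra.
Qed.

Lemma lexpos_asym v : lexpos v -> ~ lexpos (fun k => - v k).
Proof.
move=> [k1 [v1 v10]] [k2 [v2 v20]].
case: (ltngtP k1 k2) => [/v20|/v10|eq12]; try lra.
by rewrite eq12 in v1; lra.
Qed.

Lemma lexpos_trichotomy v : (forall k, v k = 0) \/ lexpos v \/ lexpos (fun k => - v k).
Proof.
have [[k vk]|] := EM (exists k, v k != 0); last first.
  by move=> nz; left=> k; apply/eqP/negPn/negP => vk; apply: nz; exists k.
right; case: (ex_minnP (ex_intro (fun k => v k != 0) k vk)) => k0 /eqP vk0 min.
have v0 k' : (k' < k0)%N -> v k' = 0.
  by move=> lt; apply/eqP; apply: contraTT lt => /min; rewrite -leqNgt.
have [pos|neg] := Rlt_or_le 0 (v k0); [left | right]; exists k0; split=> //; first lra.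
by move=> k' /v0 ->; ring.
Qed.

Lemma lexpos_ge0 v : lexpos v -> 0 <= v 0%N.
Proof. by case=> [[|k] [v_pos v0]]; [lra | rewrite v0 //; lra]. Qed.

Lemma lexpos_real v : (forall k, k != 0%N -> v k = 0) -> lexpos v <-> 0 < v 0%N.
Proof.
move=> v_real; split=> [[[|k] [v_pos _]] //|v_pos]; last by exists 0%N.
by rewrite v_real // in v_pos; lra.
Qed.

End LexicographicOrder.

(* A lexicographic position: node j carries the population k |-> p k j, ordered
   lexicographically, and p 0 is its real part. *)
Notation lpos n := (nat -> 'I_n -> R).

Lemma all_setT n (w : seq 'I_n) : all [in [set: 'I_n]] w.
Proof. by apply/allP => x _; rewrite inE. Qed.

Section LexGame.
Variables (n : nat) (M : 'I_n -> 'I_n -> R).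
Implicit Types (p : lpos n) (Z : {set 'I_n}) (s : seq 'I_n).

Definition lplay p s : lpos n := fun k => play M (p k) s.
Definition lpop p j : nat -> R := fun k => p k j.
Definition lopp p : lpos n := fun k j => - p k j.

Fixpoint llegal Z p s : Prop :=
  if s is i :: s' then [/\ i \in Z, lexpos (lpop p i) & llegal Z (lplay p [:: i]) s']
  else True.

Definition lterminal Z p := forall j, j \in Z -> ~ lexpos (lpop p j).
Definition lbounded Z p N := forall s, llegal Z p s -> (size s <= N)%N.

Lemma lplay_cat p s1 s2 : lplay p (s1 ++ s2) = lplay (lplay p s1) s2.
Proof. by apply: funext => k; rewrite /lplay play_cat. Qed.

Lemma lplay_rcons p s i : lplay p (rcons s i) = lplay (lplay p s) [:: i].
Proof. by rewrite -cats1 lplay_cat. Qed.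

Lemma lplay_opp p s : lplay (lopp p) s = lopp (lplay p s).
Proof. by apply: funext => k; rewrite /lplay /lopp play_opp. Qed.

Lemma loppK : involutive lopp.
Proof. by move=> p; apply: funext => k; apply: funext => j; rewrite /lopp Ropp_involutive. Qed.

Lemma llegal_cat Z p s1 s2 :
  llegal Z p (s1 ++ s2) <-> llegal Z p s1 /\ llegal Z (lplay p s1) s2.
Proof.
elim: s1 p => [|i s1 IH] p /=; first by split=> // [[]].
split=> [[iZ pos /IH[]] | [[iZ pos legal1] legal2]]; first by [].
by split=> //; apply/IH.
Qed.

Lemma llegal_rcons Z p s i :
  llegal Z p (rcons s i) <-> [/\ llegal Z p s, i \in Z & lexpos (lpop (lplay p s) i)].
Proof. by rewrite -cats1 llegal_cat /=; split=> [[? [? ? _]] | [? ? ?]]. Qed.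

Lemma llegal_all Z p s : llegal Z p s -> all [in Z] s.
Proof. by elim: s p => //= i s IH p [-> _ /IH]. Qed.

Lemma llegal_sub Z Z' p s : Z \subset Z' -> llegal Z p s -> llegal Z' p s.
Proof. by move=> /subsetP ZZ'; elim: s p => //= i s IH p [/ZZ' ? ? /IH]. Qed.

Lemma lbounded_sub Z Z' p N : Z \subset Z' -> lbounded Z' p N -> lbounded Z p N.
Proof. by move=> ZZ' bnd s /(llegal_sub ZZ') /bnd. Qed.

Lemma lbounded_play Z p s N :
  lbounded Z p N -> llegal Z p s -> lbounded Z (lplay p s) (N - size s).
Proof.
move=> bnd legal t legal_t.
by have := bnd (s ++ t); rewrite llegal_cat size_cat => /(_ (conj legal legal_t)); lia.
Qed.

Lemma llegal_greedy Z p N :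
  lbounded Z p N -> exists t, llegal Z p t /\ lterminal Z (lplay p t).
Proof.
elim: N p => [|N IH] p bnd.
  by exists [::]; split=> // j jZ pos; move: (bnd [:: j] (And3 jZ pos I)).
have [term|] := EM (lterminal Z p); first by exists [::].
move=> /existsNP [j /not_implyP [jZ /contrapT pos]].
have [|t [legal term]] := IH (lplay p [:: j]).
  by move=> s legal; apply: (bnd (j :: s)).
by exists (j :: t).
Qed.

Lemma llegal_alt_word_of Z p i j (t : nat) : i \in Z -> j \in Z ->
  (forall s : nat, (s < t)%N -> lexpos (lpop (lplay p (alt_word i j s)) (alt_node i j s))) ->
  llegal Z p (alt_word i j t).
Proof.
move=> iZ jZ; elim: t => // t IH pos; rewrite alt_wordS llegal_rcons; split.
- by apply: IH => s lt; apply: pos; apply: ltnW.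
- by rewrite /alt_node; case: (odd t).
- exact: pos.
Qed.

Hypothesis M_diag : forall i, M i i = 2.

Lemma lpop_fire p i : lpop (lplay p [:: i]) i = (fun k => - lpop p i k).
Proof. by apply: funext => k; rewrite /lpop /lplay /= /fire M_diag; ring. Qed.

Lemma lfireK p i : lplay (lplay p [:: i]) [:: i] = p.
Proof. by apply: funext => k; rewrite /lplay /= fireK. Qed.

Lemma llegal_rev Z p s : llegal Z p s ->
  llegal Z (lopp (lplay p s)) (rev s) /\ lplay (lopp (lplay p s)) (rev s) = lopp p.
Proof.
elim: s p => [|i s IH] p //= [iZ pos /IH[legal_rev end_rev]].
rewrite -[lplay p (i :: s)]/(lplay (lplay p [:: i]) s).
rewrite rev_cons llegal_rcons lplay_rcons end_rev lplay_opp; split.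
- split=> //; rewrite -lplay_opp lpop_fire.
  by rewrite (_ : (fun k => _) = lpop p i) //; apply: funext => k; rewrite /lpop /lopp; ring.
- by rewrite lfireK.
Qed.

End LexGame.

Section StrongConvergence.
Variables (n : nat) (M : 'I_n -> 'I_n -> R) (m : 'I_n -> 'I_n -> option nat).
Hypotheses (M_egcm : EGCM M) (m_coxeter : coxeter_matrix m) (Mm : assoc_coxeter M m).
Variable Z : {set 'I_n}.
Implicit Types (p : lpos n) (u v : seq 'I_n).

Lemma lplay_cox_eq p u v : cox_eq m u v -> lplay M p u = lplay M p v.
Proof. by move=> uv; apply: funext => k; rewrite /lplay (play_cox_eq M_egcm m_coxeter Mm _ uv). Qed.

Lemma lpop_alt_word p i j (s : nat) : i != j ->
  lpop (lplay M p (alt_word i j s)) (alt_node i j s) =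
  (fun k => cheb (- M i j) (- M j i) 1 0 s.+1 * p k i + cheb (- M i j) (- M j i) 0 1 s.+1 * p k j).
Proof.
move=> ij; apply: funext => k; rewrite /lpop /lplay.
by rewrite (proj1 (play_alt_word M_egcm _ _ ij)) cheb_lin; ring.
Qed.

Lemma llegal_alt_word p i j : i != j -> i \in Z -> j \in Z ->
  lexpos (lpop p i) -> lexpos (lpop p j) ->
  if m i j is Some k then llegal M Z p (alt_word i j k)
  else forall t, llegal M Z p (alt_word i j t).
Proof.
move=> ij iZ jZ pi_pos pj_pos.
set a := - M i j; set b := - M j i.
have step (s : nat) : 0 <= cheb a b 1 0 s.+1 -> 0 <= cheb a b 0 1 s.+1 ->
    0 < cheb a b 1 0 s.+1 + cheb a b 0 1 s.+1 ->
    lexpos (lpop (lplay M p (alt_word i j s)) (alt_node i j s)).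
  by move=> c1 c2 c12; rewrite lpop_alt_word //; apply: lexpos_comb.
have prod := Mm ij; case mij : (m i j) prod => [k|] prod.
- apply: llegal_alt_word_of => // s lt; have := proj2 (m_coxeter ij) k mij.
  rewrite leq_eqVlt => /orP[/eqP k2 | k_ge3].
  + have [Mij Mji] := cox_order2_offdiag M_egcm Mm ij (etrans mij (congr1 Some (esym k2))).
    rewrite -k2 in lt; apply: step; rewrite /a /b Mij Mji;
      by case: s lt => [|[|]] //= _; lra.
  + have [Mij Mji] := cox_order_ge3_offdiag M_egcm Mm ij mij k_ge3.
    have ab : a * b = 4 * cos (PI / INR k) ^ 2 by rewrite -prod /a /b; ring.
    have a_pos : 0 < a by rewrite /a; lra.
    have b_pos : 0 < b by rewrite /b; lra.
    have range : (1 <= s.+1 <= k)%N by [].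
    have [c1 [c2 c12]] := cheb_nonneg k_ge3 a_pos b_pos ab range.
    exact: step.
- move=> t; apply: llegal_alt_word_of => // s _.
  have ji : j != i by rewrite eq_sym.
  have := egcm_offdiag_le0 M_egcm ij; have := egcm_offdiag_le0 M_egcm ji => Mji Mij.
  have a_pos : 0 < a by rewrite /a; nra.
  have b_pos : 0 < b by rewrite /b; nra.
  have ab4 : 4 <= a * b by rewrite /a /b; lra.
  have [c1 c2] := cheb_pos_inf a_pos b_pos ab4 (ltn0Sn s).
  by apply: step; lra.
Qed.

Definition strongly_convergent N p := forall u,
  llegal M Z p u -> lterminal Z (lplay M p u) -> size u = N ->
  forall v, llegal M Z p v ->
    (size v <= N)%N /\ (lterminal Z (lplay M p v) -> size v = N /\ cox_eq m u v).

(* Firing i, j alternately m_ij times, starting with either, gives two legal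
   plays with the same end, which a common terminal continuation turns into
   instances of the induction hypothesis at p fired at i and at j. *)
Lemma strongly_convergent_diamond N p i j u v :
  (forall q, strongly_convergent N q) -> i != j ->
  llegal M Z p (i :: u) -> lterminal Z (lplay M p (i :: u)) -> size u = N ->
  llegal M Z p (j :: v) ->
  (size v <= N)%N /\
  (lterminal Z (lplay M p (j :: v)) -> size v = N /\ cox_eq m (i :: u) (j :: v)).
Proof.
move=> IH ij [iZ pi legal_u] term_u size_u [jZ pj legal_v].
have IHi := IH _ _ legal_u term_u size_u.
have := llegal_alt_word ij iZ jZ pi pj; case mij : (m i j) => [k|] alt; last first.
  have legal_alt : llegal M Z (lplay M p [:: i]) (alt_word j i N.+1) by case: (alt N.+2).
  by have [] := IHi _ legal_alt; rewrite size_alt_word ltnn.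
have ji : j != i by rewrite eq_sym.
have := llegal_alt_word ji jZ iZ pj pi; rewrite -(proj1 (m_coxeter ij)) mij.
have := proj2 (m_coxeter ij) k mij.
case: k mij alt => // k mij alt _ alt'.
have alt_i : llegal M Z (lplay M p [:: i]) (alt_word j i k) by case: alt.
have alt_j : llegal M Z (lplay M p [:: j]) (alt_word i j k) by case: alt'.
have cij := cox_eq_alt ij mij.
have same_end : lplay M (lplay M p [:: i]) (alt_word j i k) =
                lplay M (lplay M p [:: j]) (alt_word i j k) := lplay_cox_eq p cij.
have [k_le _] := IHi _ alt_i; rewrite size_alt_word in k_le.
have := lbounded_play (fun s ls => proj1 (IHi s ls)) alt_i; rewrite size_alt_word.
case/llegal_greedy=> t [legal_t term_t].
have legal_it : llegal M Z (lplay M p [:: i]) (alt_word j i k ++ t) by apply/llegal_cat.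
have term_it : lterminal Z (lplay M (lplay M p [:: i]) (alt_word j i k ++ t)).
  by rewrite lplay_cat.
have [_ /(_ term_it) [size_it c_it]] := IHi _ legal_it.
have legal_jt : llegal M Z (lplay M p [:: j]) (alt_word i j k ++ t).
  by apply/llegal_cat; split=> //; rewrite -same_end.
have term_jt : lterminal Z (lplay M (lplay M p [:: j]) (alt_word i j k ++ t)).
  by rewrite lplay_cat -same_end.
have size_jt : size (alt_word i j k ++ t) = N.
  by move: size_it; rewrite !size_cat !size_alt_word.
have [v_le v_term] := IH _ _ legal_jt term_jt size_jt _ legal_v.
split=> // /v_term[size_v c_v]; split=> //.
apply: cox_trans (cox_eq_cons i c_it) _.
apply: cox_trans (cox_eq_catr t cij) _.
exact: cox_eq_cons.
Qed.

Theorem strong_convergence N p : strongly_convergent N p.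
Proof.
elim: N p => [|N IH] p [|i u] legal_u term_u //= size_u [|j v] legal_v.
- by split=> // _; split=> //; apply: cox_refl.
- by case: legal_v => jZ pj _; case: (term_u j jZ pj).
- by split=> // /(_ i) []; case: legal_u.
case: size_u => size_u; have [ij|ij] := eqVneq i j.
- case: legal_u legal_v => iZ pi legal_u; rewrite -ij => -[_ _ legal_v].
  have [v_le v_term] := IH _ _ legal_u term_u size_u _ legal_v.
  split=> // term_v; have [size_v c_v] := v_term term_v.
  by rewrite /= size_v; split=> //; apply: cox_eq_cons.
- have [v_le v_term] := strongly_convergent_diamond IH ij legal_u term_u size_u legal_v.
  by split=> // /v_term[size_v c_v]; rewrite /= size_v.
Qed.

End StrongConvergence.

(** * Finite parabolic subgroups *)

Section Linearity.
Variables (n : nat) (M : 'I_n -> 'I_n -> R).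

Definition basis_pos (k : 'I_n) : 'I_n -> R := fun j => if j == k then 1 else 0.

Lemma play_lin q s j : play M q s j = (\sum_k q k * play M (basis_pos k) s j)%R.
Proof.
elim/last_ind: s j => [|s a IH] j.
  rewrite (bigD1 j) //= /basis_pos eqxx mulr1 big1 ?addr0 // => k kj.
  by rewrite eq_sym (negbTE kj) mulr0.
rewrite play_rcons /fire IH (IH a) !RminusE !RmultE mulr_sumr -sumrB.
by apply: eq_bigr => k _; rewrite play_rcons /fire RminusE RmultE mulrBr mulrCA.
Qed.

Hypothesis M_diag : forall i, M i i = 2.

Lemma play_basis_neq0 s i : exists k, play M (basis_pos k) s i <> 0.
Proof.
apply: contrapT => /forallNP all0.
have := play_revK M_diag (basis_pos i) s; move/(congr1 (fun q => q i)).
rewrite play_lin big1 => [|k _]; last by have := all0 k; move/contrapT => ->; rewrite mulr0.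
by rewrite /basis_pos eqxx => /eqP; rewrite eq_sym oner_eq0.
Qed.

End Linearity.

Definition parabolic_finite n (m : 'I_n -> 'I_n -> option nat) (Z : {set 'I_n}) :=
  exists S : seq (seq 'I_n), all (all [in Z]) S /\
    forall w, all [in Z] w -> exists2 w', w' \in S & cox_eq m w w'.

Fixpoint words_upto n N : seq (seq 'I_n) :=
  [::] :: if N is N'.+1 then [seq i :: w | i <- enum 'I_n, w <- words_upto n N'] else [::].

Lemma mem_words_upto n N (w : seq 'I_n) : (size w <= N)%N -> w \in words_upto n N.
Proof.
elim: N w => [|N IH] [|i w] //= w_le; rewrite inE; apply/orP; right.
by apply: (allpairs_f (fun i w => i :: w)); [rewrite mem_enum | apply: IH].
Qed.

Section Finiteness.
Variables (n : nat) (M : 'I_n -> 'I_n -> R) (m : 'I_n -> 'I_n -> option nat).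
Hypotheses (M_egcm : EGCM M) (m_coxeter : coxeter_matrix m) (Mm : assoc_coxeter M m).
Implicit Types (p rho : lpos n) (Z : {set 'I_n}) (u v w : seq 'I_n).

Lemma lbounded_of_terminal Z p u :
  llegal M Z p u -> lterminal Z (lplay M p u) -> lbounded M Z p (size u).
Proof. by move=> legal term v /(strong_convergence M_egcm m_coxeter Mm legal term erefl)[]. Qed.

Lemma cox_eq_of_terminal Z p u v :
  llegal M Z p u -> lterminal Z (lplay M p u) ->
  llegal M Z p v -> lterminal Z (lplay M p v) -> cox_eq m u v.
Proof.
move=> legal_u term_u legal_v term_v.
by have [_ /(_ term_v)[]] := strong_convergence M_egcm m_coxeter Mm legal_u term_u erefl legal_v.
Qed.

(* Reversing u from the negative of its end reaches -rho, which is terminal: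
   strong convergence then compares rev u with a play starting with i. *)
Lemma exchange Z rho u i : (forall j, j \in Z -> lexpos (lpop rho j)) ->
  llegal M Z rho u -> i \in Z -> lexpos (lpop (lopp (lplay M rho u)) i) ->
  exists2 v, llegal M Z rho v & cox_eq m (rcons u i) v.
Proof.
move=> rho_pos legal_u iZ neg_i; set p := lplay M rho u in neg_i.
have M_diag := egcm_diag M_egcm.
have [legal_rev end_rev] := llegal_rev M_diag legal_u; rewrite -/p in legal_rev end_rev.
have term_rev : lterminal Z (lplay M (lopp p) (rev u)).
  by rewrite end_rev => j jZ; apply: lexpos_asym (rho_pos j jZ).
have := lbounded_play (lbounded_of_terminal legal_rev term_rev) (And3 iZ neg_i I : llegal M Z _ [:: i]).
case/llegal_greedy => t [legal_t term_t].
have legal_it : llegal M Z (lopp p) (i :: t) by split.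
have c_rev := cox_eq_of_terminal legal_rev term_rev legal_it term_t.
have end_t : lplay M (lplay M (lopp p) [:: i]) t = lopp rho.
  by rewrite -[LHS]/(lplay M (lopp p) (i :: t)) -(lplay_cox_eq M_egcm m_coxeter Mm _ c_rev).
have [legal_rev_t _] := llegal_rev M_diag legal_t; rewrite end_t loppK in legal_rev_t.
exists (rev t) => //.
have := cox_eq_rev m_coxeter c_rev; rewrite revK rev_cons => /(cox_eq_rcons i) c_u.
apply: cox_trans c_u _; rewrite -!cats1 -catA.
by have := cox_sq m (rev t) [::] i; rewrite !cats0; apply.
Qed.

(* The tail is the identity matrix, so that no population ever vanishes. *)
Definition generic_tail rho := forall k : 'I_n, rho k.+1 = basis_pos k.

Lemma generic_lpop_neq0 rho s i : generic_tail rho -> exists k, lplay M rho s k i <> 0.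
Proof.
move=> gen; have [k nz] := play_basis_neq0 (egcm_diag M_egcm) s i.
by exists k.+1; rewrite /lplay gen.
Qed.

Lemma cox_eq_llegal Z rho w : (forall j, j \in Z -> lexpos (lpop rho j)) ->
  generic_tail rho -> all [in Z] w -> exists2 v, llegal M Z rho v & cox_eq m w v.
Proof.
move=> rho_pos gen; elim/last_ind: w => [|w i IH]; first by exists [::]; last exact: cox_refl.
rewrite all_rcons => /andP[iZ /IH[v legal_v c_v]].
have c_wi := cox_eq_rcons i c_v.
have [zero|[pos|neg]] := lexpos_trichotomy (lpop (lplay M rho v) i).
- by have [k] := generic_lpop_neq0 v i gen; rewrite -[lplay M rho v k i]/(lpop _ i k) zero.
- by exists (rcons v i) => //; apply/llegal_rcons.
- have [v' legal_v' c_v'] := exchange rho_pos legal_v iZ neg.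
  by exists v' => //; apply: cox_trans c_wi c_v'.
Qed.

Lemma parabolic_finite_of_lbounded Z rho N : (forall j, j \in Z -> lexpos (lpop rho j)) ->
  generic_tail rho -> lbounded M Z rho N -> parabolic_finite m Z.
Proof.
move=> rho_pos gen bnd; exists [seq w <- words_upto n N | all [in Z] w]; split.
  by apply/allP => w; rewrite mem_filter => /andP[].
move=> w /(cox_eq_llegal rho_pos gen)[v legal_v c_v]; exists v => //.
by rewrite mem_filter (llegal_all legal_v) mem_words_upto // bnd.
Qed.

End Finiteness.

Section Nonsingularity.
Variables (n : nat) (M : 'I_n -> 'I_n -> R) (m : 'I_n -> 'I_n -> option nat).
Hypotheses (M_egcm : EGCM M) (m_coxeter : coxeter_matrix m) (Mm : assoc_coxeter M m).
Variable Z : {set 'I_n}.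

Lemma play_pairing_invariant (d : 'I_n -> R) q w :
  (forall i, i \in Z -> (\sum_(j in Z) M i j * d j)%R = 0) -> all [in Z] w ->
  (\sum_(j in Z) play M q w j * d j)%R = (\sum_(j in Z) q j * d j)%R.
Proof.
move=> Md0; elim: w q => [|i w IH] q //= /andP[iZ wZ]; rewrite IH //.
rewrite (eq_bigr (fun j => q j * d j - q i * (M i j * d j))%R) => [|j _]; last first.
  by rewrite /fire RminusE RmultE mulrBl mulrCA mulrA.
by rewrite sumrB -mulr_sumr Md0 // mulr0 subr0.
Qed.

(* Firing i in Z permutes a finite W_Z-orbit and negates the i-th entry. *)
Lemma orbit_pop_sum0 (S : seq (seq 'I_n)) l0 i : all (all [in Z]) S ->
  (forall w, all [in Z] w -> exists2 w', w' \in S & cox_eq m w w') -> i \in Z ->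
  (\sum_(x <- undup [seq play M l0 w | w <- S]) x i)%R = 0.
Proof.
move=> SZ S_rep iZ; set O := undup _; have M_diag := egcm_diag M_egcm.
have O_fire x : x \in O -> fire M i x \in O.
  rewrite mem_undup => /mapP[w /(allP SZ) wZ ->]; rewrite -play_rcons.
  have [|w' w'S c_w] := S_rep (rcons w i); first by rewrite all_rcons iZ.
  by rewrite (play_cox_eq M_egcm m_coxeter Mm _ c_w) mem_undup; apply: map_f.
have O_perm : perm_eq O (map (fire M i) O).
  apply: uniq_perm; rewrite ?map_inj_uniq ?undup_uniq //; first exact: can_inj (fireK M_diag i).
  move=> x; apply/idP/mapP => [xO|[y yO ->]]; last exact: O_fire.
  by exists (fire M i x); [apply: O_fire | rewrite fireK].
have : (\sum_(x <- O) x i = - \sum_(x <- O) x i)%R.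
  rewrite [LHS](perm_big _ O_perm) big_map -sumrN.
  by apply: eq_bigr => x _; rewrite /fire M_diag -RoppE; change (x i - 2 * x i = - x i); ring.
by move/eqP; rewrite -addr_eq0 -mulr2n mulrn_eq0 => /eqP.
Qed.

(* The pairing with d is W_Z-invariant; normalized to 1 at l0 and summed over
   the finite orbit of l0 it gives the size of the orbit, while
   orbit_pop_sum0 makes the sum vanish. *)
Lemma parabolic_finite_nonsingular (d : 'I_n -> R) : parabolic_finite m Z ->
  (forall i, i \in Z -> (\sum_(j in Z) M i j * d j)%R = 0) -> forall j, j \in Z -> d j = 0.
Proof.
move=> [S [SZ S_rep]] Md0 j0 j0Z; apply: contrapT => dj0.
set D := (\sum_(j in Z) d j * d j)%R.
have D_pos : 0 < D.
  rewrite /D (bigD1 j0) //=.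
  have : 0 <= (\sum_(j in Z | j != j0) d j * d j)%R.
    by apply/RleP/sumr_ge0 => j _; rewrite -expr2 sqr_ge0.
  have : 0 < (d j0 * d j0)%R by apply/RltP; rewrite -expr2 exprn_even_gt0 //; apply/eqP.
  exact: Rplus_lt_le_0_compat.
set l0 := fun j => d j / D.
have pairing_l0 : (\sum_(j in Z) l0 j * d j)%R = 1.
  rewrite /l0; under eq_bigr do rewrite RdivE mulrAC.
  by rewrite -mulr_suml -/D mulfV //; apply/eqP; apply: Rgt_not_eq.
set O := undup [seq play M l0 w | w <- S].
have l0O : l0 \in O.
  have [w' w'S c_w] := S_rep [::] isT.
  have -> : l0 = play M l0 w' by rewrite -(play_cox_eq M_egcm m_coxeter Mm _ c_w).
  by rewrite mem_undup; apply: map_f.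
have : (\sum_(x <- O) \sum_(j in Z) x j * d j = (size O)%:R)%R.
  rewrite -sum1_size natr_sum; apply: eq_big_seq => x.
  by rewrite mem_undup => /mapP[w /(allP SZ) wZ ->]; rewrite play_pairing_invariant.
rewrite exchange_big big1 => [/esym/eqP|j jZ].
  by rewrite pnatr_eq0 size_eq0 => /eqP O0; rewrite O0 in l0O.
by rewrite -mulr_suml (orbit_pop_sum0 _ SZ S_rep jZ) mul0r.
Qed.

Definition restricted_mx : 'M[R]_n :=
  \matrix_(a, b) (if (a \in Z) && (b \in Z) then M b a else (a == b)%:R%R).

Lemma restricted_mxE (v : 'rV[R]_n) b : ((v *m restricted_mx) ord0 b =
  if b \in Z then \sum_(a in Z) M b a * v ord0 a else v ord0 b)%R.
Proof.
rewrite mxE; case: ifP => bZ.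
  rewrite [RHS]big_mkcond; apply: eq_bigr => a _; rewrite mxE bZ andbT.
  by case: ifP => aZ; [rewrite mulrC | rewrite (_ : a == b = false) ?mulr0 //; apply: contraFF aZ => /eqP->].
rewrite (bigD1 b) //= big1 => [|a ab]; rewrite mxE bZ andbF.
  by rewrite eqxx mulr1 addr0.
by rewrite (negbTE ab) mulr0.
Qed.

Lemma parabolic_finite_solvable : parabolic_finite m Z ->
  exists x : 'I_n -> R, forall i, i \in Z -> (\sum_(j in Z) M i j * x j)%R = 1.
Proof.
move=> fin; have A_unit : restricted_mx \in unitmx.
  rewrite unitmxE unitfE; apply/det0P => -[v v_neq0 vA0]; move/eqP: v_neq0; apply.
  have kerv b : ((v *m restricted_mx) ord0 b = 0)%R by rewrite vA0 mxE.
  apply/rowP => a; rewrite mxE; case: (boolP (a \in Z)) => aZ.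
  - apply: (parabolic_finite_nonsingular (d := fun a => v ord0 a) fin) => // b bZ.
    by rewrite -[RHS](kerv b) restricted_mxE bZ.
  - by rewrite -[RHS](kerv a) restricted_mxE (negbTE aZ).
pose e : 'rV[R]_n := (\row_b (if b \in Z then 1 else 0))%R.
exists (fun j => (e *m invmx restricted_mx)%R ord0 j) => i iZ.
have := restricted_mxE (e *m invmx restricted_mx)%R i.
by rewrite mulmxKV // iZ /e mxE iZ => <-.
Qed.

End Nonsingularity.

Section UniformBound.
Variables (n : nat) (M : 'I_n -> 'I_n -> R) (Z : {set 'I_n}).
Implicit Types (p q : lpos n) (s : seq 'I_n).

Fixpoint ltrace p s : seq (lpos n) :=
  p :: if s is i :: s' then ltrace (lplay M p [:: i]) s' else [::].

Lemma size_ltrace p s : size (ltrace p s) = (size s).+1.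
Proof. by elim: s p => //= i s IH p; rewrite IH. Qed.

Lemma ltrace_reach p s q : llegal M Z p s -> q \in ltrace p s ->
  exists2 w, all [in Z] w & q = lplay M p w.
Proof.
elim: s p => [|i s IH] p /=; first by rewrite inE => _ /eqP->; exists [::].
case=> iZ _ legal; rewrite inE => /orP[/eqP->|/(IH _ legal)[w wZ ->]]; first by exists [::].
by exists (i :: w); rewrite /= ?iZ.
Qed.

Variable x : 'I_n -> R.
Hypothesis Mx1 : forall i, i \in Z -> (\sum_(j in Z) M i j * x j)%R = 1.

Definition potential p : nat -> R := fun k => (\sum_(j in Z) x j * p k j)%R.

Lemma potential_fire p i : i \in Z ->
  potential (lplay M p [:: i]) = (fun k => potential p k - p k i).
Proof.
move=> iZ; apply: funext => k; rewrite /potential /lplay /=.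
rewrite (eq_bigr (fun j => x j * p k j - M i j * x j * p k i)%R) => [|j _]; last first.
  by rewrite /fire RminusE RmultE mulrBr mulrA (mulrC (x j) (M i j)).
by rewrite sumrB -mulr_suml Mx1 // mul1r.
Qed.

Lemma ltrace_below p s : llegal M Z p s -> forall q, q \in ltrace p s ->
  q = p \/ lexpos (fun k => potential p k - potential q k).
Proof.
elim: s p => [|i s IH] p /=; first by move=> _ q; rewrite inE => /eqP; left.
case=> iZ pos legal q; rewrite inE => /orP[/eqP|/(IH _ legal)[->|below]]; [by left | right..].
- rewrite potential_fire // (_ : (fun k => _) = lpop p i) //.
  by apply: funext => k; rewrite /lpop; ring.
- have := lexposD pos below; rewrite potential_fire //.
  by rewrite (_ : (fun k => _) = (fun k => potential p k - potential q k)) //; apply: funext => k; rewrite /lpop; ring.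
Qed.

Lemma ltrace_uniq p s : llegal M Z p s -> uniq (ltrace p s).
Proof.
elim: s p => [|i s IH] p //= [iZ pos legal]; rewrite IH // andbT.
apply/negP => /(ltrace_below legal)[p_eq|].
  have [k [pk _]] := pos; have := congr1 (fun q => potential q k) p_eq.
  by rewrite potential_fire //=; rewrite /lpop in pk; lra.
rewrite potential_fire // (_ : (fun k => _) = (fun k => - lpop p i k)).
  exact: lexpos_asym pos.
by apply: funext => k; rewrite /lpop; ring.
Qed.

Lemma size_llegal_lt p s (S : seq (seq 'I_n)) :
  (forall w, all [in Z] w -> exists2 w', w' \in S & lplay M p w = lplay M p w') ->
  llegal M Z p s -> (size s < size S)%N.
Proof.
move=> S_rep legal; rewrite -(size_ltrace p) -(size_map (lplay M p)).
apply: uniq_leq_size (ltrace_uniq legal) _ => q /(ltrace_reach legal)[w /S_rep[w' w'S ->] ->].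
exact: map_f.
Qed.

End UniformBound.

Lemma parabolic_finite_lbounded n (M : 'I_n -> 'I_n -> R) m (Z : {set 'I_n}) :
  EGCM M -> coxeter_matrix m -> assoc_coxeter M m -> parabolic_finite m Z ->
  exists B, forall (p : lpos n) s, llegal M Z p s -> (size s <= B)%N.
Proof.
move=> M_egcm m_coxeter Mm fin; have [x Mx1] := parabolic_finite_solvable M_egcm m_coxeter Mm fin.
case: fin => S [_ S_rep]; exists (size S) => p s legal; apply: ltnW.
apply: (size_llegal_lt Mx1 _ legal) => w /S_rep[w' w'S c_w].
by exists w' => //; apply: (lplay_cox_eq M_egcm m_coxeter Mm p c_w).
Qed.

(** * From an admissible position to a finite group *)

Section RealPositions.
Variables (n : nat) (M : 'I_n -> 'I_n -> R).
Implicit Types (l : 'I_n -> R) (p : lpos n) (Z : {set 'I_n}).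

Definition emb l : lpos n := fun k => if k is 0%N then l else fun=> 0.

Lemma lplay_emb l s : lplay M (emb l) s = emb (play M l s).
Proof.
apply: funext => -[|k] //=; rewrite /lplay /=.
elim: s => //= i s IH; rewrite -[RHS]IH; congr play.
by apply: funext => j; rewrite /fire; ring.
Qed.

Lemma lexpos_emb l j : lexpos (lpop (emb l) j) <-> 0 < l j.
Proof. by apply: lexpos_real => -[]. Qed.

Lemma llegal_emb l s : legal_play M l s <-> llegal M [set: 'I_n] (emb l) s.
Proof.
elim: s l => //= i s IH l; rewrite lplay_emb.
split=> [[li /IH legal] | [_ /lexpos_emb li /IH legal]] //.
by split; rewrite ?inE ?lexpos_emb.
Qed.

Lemma lterminal_emb l : lterminal [set: 'I_n] (emb l) <-> forall j, l j <= 0.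
Proof.
split=> [term j | nonpos j _]; rewrite ?lexpos_emb.
- by apply: Rnot_lt_le; rewrite -lexpos_emb; apply: term.
- by apply: Rle_not_lt.
Qed.

Lemma lopp_emb l : lopp (emb l) = emb (fun j => - l j).
Proof. by apply: funext => -[|k] //; apply: funext => j /=; rewrite /lopp Ropp_0. Qed.

End RealPositions.

Section Boundedness.
Variables (n : nat) (M : 'I_n -> 'I_n -> R) (m : 'I_n -> 'I_n -> option nat).
Hypotheses (M_egcm : EGCM M) (m_coxeter : coxeter_matrix m) (Mm : assoc_coxeter M m).
Implicit Types (p : lpos n) (Z : {set 'I_n}).

Definition bounded_plays Z p := exists N, lbounded M Z p N.

(* Firing a node with lex-negative population is undone by a legal move. *)
Lemma bounded_plays_fire Z p i : i \in Z -> bounded_plays Z p -> bounded_plays Z (lplay M p [:: i]).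
Proof.
move=> iZ [N bnd]; have M_diag := egcm_diag M_egcm.
have [zero|[pos|neg]] := lexpos_trichotomy (lpop p i).
- exists N; rewrite (_ : lplay M p [:: i] = p) //.
  by apply: funext => k; apply: funext => j; rewrite /lplay /= /fire -[p k i]/(lpop p i k) zero; ring.
- by exists (N - 1)%N; apply: lbounded_play bnd (And3 iZ pos I : llegal M Z p [:: i]).
- have [t [legal_t term_t]] := llegal_greedy bnd.
  have legal_it : llegal M Z (lplay M p [:: i]) (i :: t).
    by split; rewrite ?lpop_fire ?lfireK.
  exists (size (i :: t)); apply: (lbounded_of_terminal M_egcm m_coxeter Mm legal_it).
  by rewrite /= -[lplay M _ (i :: t)]/(lplay M (lplay M (lplay M p [:: i]) [:: i]) t) lfireK.
Qed.

Lemma bounded_plays_play Z p w : all [in Z] w -> bounded_plays Z p -> bounded_plays Z (lplay M p w).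
Proof.
elim: w p => //= i w IH p /andP[iZ wZ] /(bounded_plays_fire iZ).
exact: IH.
Qed.

End Boundedness.

Section RealPart.
Variables (n : nat) (M : 'I_n -> 'I_n -> R).
Hypothesis M_diag : forall i, M i i = 2.
Implicit Types (p : lpos n) (Z : {set 'I_n}).

Definition real_zeros Z p := [set j in Z | p 0%N j == 0].

Lemma real_zeros_proper Z p j : j \in Z -> p 0%N j <> 0 -> real_zeros Z p \proper Z.
Proof.
move=> jZ pj; rewrite properE; apply/andP; split; first by apply/subsetP => x; rewrite inE => /andP[].
by apply/subsetPn; exists j => //; rewrite inE jZ; apply/eqP.
Qed.

(* Moves at nodes of real population 0 leave the real part unchanged. *)
Lemma llegal_split_real Z p s : llegal M Z p s ->
  llegal M (real_zeros Z p) p s \/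
  exists w i s', [/\ s = w ++ i :: s', llegal M (real_zeros Z p) p w,
    lplay M p w 0%N = p 0%N, 0 < p 0%N i & llegal M Z (lplay M p w) (i :: s')].
Proof.
elim: s p => [|a s IH] p; first by left.
case=> aZ pos legal; have [pa_pos|pa_le0] := Rlt_or_le 0 (p 0%N a).
  by right; exists [::], a, s.
have pa0 : p 0%N a = 0 by have := lexpos_ge0 pos; rewrite /lpop; lra.
have real_eq : lplay M p [:: a] 0%N = p 0%N.
  by apply: funext => j; rewrite /lplay /= /fire pa0; ring.
have zeros_eq : real_zeros Z (lplay M p [:: a]) = real_zeros Z p.
  by apply/setP => j; rewrite !inE real_eq.
have aZ0 : a \in real_zeros Z p by rewrite inE aZ pa0 eqxx.
case: (IH _ legal) => [legal0|[w [i [s' [-> legal_w real_w pi legal_s']]]]].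
  by left; split=> //; rewrite -zeros_eq.
right; exists (a :: w), i, s'; split=> //.
- by split=> //; rewrite -zeros_eq.
- by rewrite -[lplay M p (a :: w)]/(lplay M (lplay M p [:: a]) w) real_w real_eq.
- by rewrite -real_eq.
Qed.

(* Between two moves with positive real population, a legal play from p stays
   in the proper subset of Z where the real part of p vanishes. *)
Lemma lbounded_from_real Z B N p :
  (forall Z', Z' \proper Z -> forall q s, llegal M Z' q s -> (size s <= B)%N) ->
  (exists2 j, j \in Z & p 0%N j <> 0) -> lbounded M Z (emb (p 0%N)) N ->
  lbounded M Z p (N.+1 * B.+1).
Proof.
move=> boundB; elim: N p => [|N IH] p [j jZ pj] bnd s legal.
all: case: (llegal_split_real legal) => [|[w [i [s' [-> legal_w real_w pi legal_is']]]]].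
all: try by move/(boundB _ (real_zeros_proper jZ pj)); nia.
all: have first_real : llegal M Z (emb (p 0%N)) [:: i] by case: legal_is' => iZ; split=> //; apply/lexpos_emb.
  by move/bnd: first_real.
case: legal_is' => iZ _ legal_s'; set p2 := lplay M (lplay M p w) [:: i] in legal_s'.
have real2 : emb (p2 0%N) = lplay M (emb (p 0%N)) [:: i] by rewrite lplay_emb -real_w.
have bnd2 : lbounded M Z (emb (p2 0%N)) N.
  by rewrite real2; have := lbounded_play bnd first_real; rewrite subn1.
have nz2 : exists2 j, j \in Z & p2 0%N j <> 0.
  apply: contrapT => no_nz; apply: pj.
  have iZ1 : all [in Z] [:: i] by rewrite /= iZ.
  apply: (play_vanish M_diag iZ1 _ jZ) => j' j'Z.
  by rewrite -real_w; apply: contrapT => nz; apply: no_nz; exists j'.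
have := IH p2 nz2 bnd2 s' legal_s'.
have := boundB _ (real_zeros_proper jZ pj) _ _ legal_w.
by rewrite size_cat /=; nia.
Qed.

End RealPart.

Section GenericPosition.
Variables (n : nat) (M : 'I_n -> 'I_n -> R) (m : 'I_n -> 'I_n -> option nat).
Hypotheses (M_egcm : EGCM M) (m_coxeter : coxeter_matrix m) (Mm : assoc_coxeter M m).

Definition generic_pos (r : 'I_n -> R) : lpos n :=
  fun k => if k is k'.+1 then fun j => if nat_of_ord j == k' then 1 else 0 else r.

Lemma generic_tail_pos r : generic_tail (generic_pos r).
Proof. by []. Qed.

Lemma lexpos_generic_pos r j : 0 <= r j -> lexpos (lpop (generic_pos r) j).
Proof.
move=> rj; have [rj_pos|rj0] := Rlt_or_le 0 (r j); first by exists 0%N.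
exists j.+1; split=> [|[|k] lt_k]; rewrite /lpop /= ?eqxx; try lra.
by rewrite eq_sym ltn_eqF.
Qed.

Lemma parabolic_finite_of_real_bounded (Z : {set 'I_n}) r N B :
  (forall j, j \in Z -> 0 <= r j) -> (exists2 j, j \in Z & r j <> 0) ->
  lbounded M Z (emb r) N ->
  (forall Z' : {set 'I_n}, Z' \proper Z ->
     forall (q : lpos n) s, llegal M Z' q s -> (size s <= B)%N) ->
  parabolic_finite m Z.
Proof.
move=> r_ge0 r_nz bnd boundB.
apply: (parabolic_finite_of_lbounded M_egcm m_coxeter Mm (rho := generic_pos r)).
- by move=> j /r_ge0; apply: lexpos_generic_pos.
- exact: generic_tail_pos.
- exact: (lbounded_from_real (egcm_diag M_egcm) boundB r_nz bnd).
Qed.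

End GenericPosition.

Lemma finite_uniform_bound (T : finType) (Q : T -> Prop) (P : T -> nat -> Prop) :
  (forall x B B', (B <= B')%N -> P x B -> P x B') -> (forall x, Q x -> exists B, P x B) ->
  exists B, forall x, Q x -> P x B.
Proof.
move=> P_mono bounded; suff [B PB] : exists B, forall x, x \in enum T -> Q x -> P x B.
  by exists B => x; apply: PB; rewrite mem_enum.
elim: (enum T) => [|a s [B PB]]; first by exists 0%N.
have [/bounded[Ba PBa]|Qa] := EM (Q a); last first.
  by exists B => x; rewrite inE => /orP[/eqP-> /Qa|/PB].
exists (maxn B Ba) => x; rewrite inE => /orP[/eqP-> _|/PB xB /xB]; apply: P_mono.
- exact: leq_maxr.
- exact: PBa.
- exact: leq_maxl.
Qed.

Section FromAdmissible.
Variables (n : nat) (M : 'I_n -> 'I_n -> R) (m : 'I_n -> 'I_n -> option nat).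
Hypotheses (M_egcm : EGCM M) (m_coxeter : coxeter_matrix m) (Mm : assoc_coxeter M m).
Hypothesis M_connected : egcm_connected M.
Variables (l : 'I_n -> R) (j0 : 'I_n).
Hypotheses (l_ge0 : forall j, 0 <= l j) (l_j0 : l j0 <> 0).
Hypothesis l_bounded : bounded_plays M [set: 'I_n] (emb l).

(* A nonzero population spreads along the edges of the E-GCM graph. *)
Lemma play_reach_neq0 c : exists w, play M l w c <> 0.
Proof.
have /connectP[path edges ->] := M_connected j0 c.
have : exists w, play M l w j0 <> 0 by exists [::].
elim: path j0 edges => [|b path IH] a //= /andP[/andP[_ Mab] edges] [w la].
apply: (IH b edges); have [lb|lb] := Req_dec (play M l w b) 0; last by exists w.
exists (rcons w a); rewrite play_rcons /fire lb => E.
have {}Mab : M a b <> 0 by move: Mab; case: Req_dec_T.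
have : M a b * play M l w a = 0 by lra.
by case/Rmult_integral => [/Mab|/la].
Qed.

(* Playing l to the end gives mu <= 0, and the reversed play from -mu ends at
   -l <= 0, so everything reachable from -mu has bounded plays; r is minus a
   Z-terminal position reached from l, chosen nonzero at c by connectivity. *)
Lemma exists_bounded_real_pos (Z : {set 'I_n}) c : c \in Z ->
  exists r, [/\ forall j, j \in Z -> 0 <= r j, exists2 j, j \in Z & r j <> 0
              & bounded_plays M Z (emb r)].
Proof.
move=> cZ; have M_diag := egcm_diag M_egcm; have [N0 bnd0] := l_bounded.
have [t [legal_t _]] := llegal_greedy bnd0.
have [legal_rev end_rev] := llegal_rev M_diag legal_t.
have bnd_mu : bounded_plays M [set: 'I_n] (lopp (lplay M (emb l) t)).
  exists (size (rev t)); apply: (lbounded_of_terminal M_egcm m_coxeter Mm legal_rev).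
  rewrite end_rev lopp_emb => j _; rewrite lexpos_emb; have := l_ge0 j; lra.
have [w lw] := play_reach_neq0 c.
have [N bnd] : bounded_plays M Z (emb (play M l w)).
  have [N bnd] := bounded_plays_play M_egcm m_coxeter Mm (all_setT w) l_bounded.
  by exists N; rewrite -lplay_emb; apply: lbounded_sub bnd; apply: subsetT.
have [t' [legal_t' term_t']] := llegal_greedy bnd.
set q := play M (play M l w) t'.
exists (fun j => - q j); split.
- by move=> j /term_t'; rewrite lplay_emb lexpos_emb /q => /Rnot_lt_le; lra.
- apply: contrapT => no_nz; apply: lw; apply: (play_vanish M_diag (llegal_all legal_t') _ cZ).
  by move=> j jZ; apply: contrapT => qj; apply: no_nz; exists j => //; rewrite /q; lra.
- have [N' bnd'] := bounded_plays_play M_egcm m_coxeter Mm (all_setT (rev t ++ w ++ t')) bnd_mu.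
  exists N'; apply: (lbounded_sub (subsetT Z)); move: bnd'.
  by rewrite !lplay_cat end_rev !lplay_opp !lplay_emb lopp_emb.
Qed.

Lemma parabolic_finite_set0 : parabolic_finite m set0.
Proof.
exists [:: [::]]; split=> // -[|i w]; first by exists [::]; rewrite ?inE //; apply: cox_refl.
by rewrite /= inE.
Qed.

Lemma parabolic_finite_of_admissible (Z : {set 'I_n}) : parabolic_finite m Z.
Proof.
elim: {Z}#|Z|.+1 {-2}Z (ltnSn #|Z|) => // c IH Z Zc.
have [->|[c0 c0Z]] := set_0Vmem Z; first exact: parabolic_finite_set0.
have [r [r_ge0 r_nz [N bnd]]] := exists_bounded_real_pos c0Z.
have [B boundB] := @finite_uniform_bound _ (fun Z' : {set 'I_n} => Z' \proper Z)
  (fun Z' B => forall (q : lpos n) s, llegal M Z' q s -> (size s <= B)%N)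
  (fun Z' B B' le bnd q s legal => leq_trans (bnd q s legal) le)
  (fun Z' lt => parabolic_finite_lbounded M_egcm m_coxeter Mm
                  (IH Z' (leq_trans (proper_card lt) Zc))).
exact: (parabolic_finite_of_real_bounded M_egcm m_coxeter Mm (B := B) r_ge0 r_nz bnd boundB).
Qed.

End FromAdmissible.

Section MainEquivalence.
Variables (n : nat) (M : 'I_n -> 'I_n -> R) (m : 'I_n -> 'I_n -> option nat).
Hypotheses (M_egcm : EGCM M) (m_coxeter : coxeter_matrix m) (Mm : assoc_coxeter M m).

Lemma admissible_coxeter_finite : admissible M -> coxeter_finite m.
Proof.
case=> connected [l [l_ge0 [[j0 l_j0] [s [legal term]]]]].
have l_bounded : bounded_plays M [set: 'I_n] (emb l).
  exists (size s); apply: (lbounded_of_terminal M_egcm m_coxeter Mm (u := s)); first exact/llegal_emb.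
  by rewrite lplay_emb; apply/lterminal_emb.
have [S [_ S_rep]] := parabolic_finite_of_admissible M_egcm m_coxeter Mm connected l_ge0 l_j0 l_bounded [set: 'I_n].
by exists S => w; apply: S_rep; apply: all_setT.
Qed.

Lemma coxeter_finite_admissible : (0 < n)%N -> egcm_connected M -> coxeter_finite m -> admissible M.
Proof.
move=> n_gt0 connected [S S_rep]; split=> //.
have [|B bnd] := parabolic_finite_lbounded M_egcm m_coxeter Mm (Z := [set: 'I_n]).
  by exists S; split=> [|w _]; [apply/allP => w _; apply: all_setT | apply: S_rep].
pose i0 := Ordinal n_gt0.
have [t [legal term]] := llegal_greedy (fun s => bnd (emb (basis_pos i0)) s).
exists (basis_pos i0); split; first by move=> j; rewrite /basis_pos; case: ifP => _; lra.
split; first by exists i0; rewrite /basis_pos eqxx; lra.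
exists t; split; first exact/llegal_emb.
by apply/lterminal_emb; rewrite -lplay_emb.
Qed.

Lemma irreducible_egcm_connected : coxeter_irreducible m -> egcm_connected M.
Proof.
move=> irr i j; apply: connect_sub (irr i j) => a b /andP[ab mab]; apply: connect1.
rewrite ab /=; case: Req_dec_T => // Mab0; move: mab; have := Mm ab.
case mab : (m a b) => [k|] prod k3; last by rewrite Mab0 in prod; lra.
by have [] := cox_order_ge3_offdiag M_egcm Mm ab mab k3; lra.
Qed.

End MainEquivalence.

(* The standard geometric representation: M_ij = -2 cos (pi / m_ij). *)
Lemma exists_egcm n (m : 'I_n -> 'I_n -> option nat) :
  coxeter_matrix m -> exists M, EGCM M /\ assoc_coxeter M m.
Proof.
move=> m_coxeter.
pose M i j := if i == j then 2 else if m i j is Some k then - 2 * cos (PI / INR k) else -2.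
have cos_ge0 k : (2 <= k)%N -> 0 <= cos (PI / INR k).
  move=> k2; have [k_eq2|k_ge3] := leqP k 2.
    by rewrite (_ : k = 2%N) /=; [rewrite (_ : 1 + 1 = 2) ?cos_PI2; lra | lia].
  by have [] := pi_div_bounds k_ge3; move=> ? ?; apply: cos_ge_0; lra.
have M_sym i j : M i j = M j i.
  rewrite /M; have [//|ji] := eqVneq j i.
  by rewrite (proj1 (m_coxeter _ _ ji)).
exists M; split; last first.
  move=> i j ij; rewrite -(M_sym i j) /M (negbTE ij); case: (m i j) => [k|]; [ring | lra].
split; first by move=> i; rewrite /M eqxx.
split.
  move=> i j ij; rewrite /M (negbTE ij); case mij : (m i j) => [k|]; last lra.
  by have := cos_ge0 k (proj2 (m_coxeter _ _ ij) k mij); lra.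
split; first by move=> i j; rewrite M_sym.
move=> i j ij; rewrite -(M_sym i j) /M (negbTE ij).
case mij : (m i j) => [k|] nz; [right | left; lra].
exists k; split; last by ring.
have := proj2 (m_coxeter _ _ ij) k mij; rewrite leq_eqVlt => /orP[/eqP k2|//].
by move: nz; rewrite -k2 /= (_ : 1 + 1 = 2) ?cos_PI2; [rewrite Rmult_0_r Rmult_0_l | ring].
Qed.

Theorem corollary4p1 (n : nat) (m : 'I_n -> 'I_n -> option nat) :
  (0 < n)%N -> coxeter_matrix m -> coxeter_irreducible m ->
  (coxeter_finite m <->
     exists M : 'I_n -> 'I_n -> R, EGCM M /\ assoc_coxeter M m /\ admissible M) /\
  (coxeter_finite m <->
     forall M : 'I_n -> 'I_n -> R, EGCM M -> assoc_coxeter M m -> admissible M).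
Proof.
move=> n_gt0 m_coxeter irr.
have fin_all M : coxeter_finite m -> EGCM M -> assoc_coxeter M m -> admissible M.
  move=> fin M_egcm Mm; have connected := irreducible_egcm_connected M_egcm Mm irr.
  exact: coxeter_finite_admissible M_egcm m_coxeter Mm n_gt0 connected fin.
have [M0 [M0_egcm M0m]] := exists_egcm m_coxeter.
split; split.
- by move=> fin; exists M0; split; [|split; last apply: fin_all].
- by case=> M [M_egcm [Mm adm]]; apply: admissible_coxeter_finite M_egcm m_coxeter Mm adm.
- by move=> fin M; apply: fin_all.
- by move=> all_adm; apply: admissible_coxeter_finite M0_egcm m_coxeter M0m (all_adm M0 M0_egcm M0m).
Qed.
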